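(* Let $L$ be a distributive lattice with $|L|>1$. Then $L^*\setminus\{0\}$ is path connected, where $L^*\subseteq\mathbb R^L$ carries the product topology and $0$ denotes the constant zero homomorphism.
   Context: $L^*$ is the set of all lattice homomorphisms $x^*:L\to[-1,1]$, i.e. maps with $x^*(a\vee b)=\max\{x^*(a),x^*(b)\}$ and $x^*(a\wedge b)=\min\{x^*(a),x^*(b)\}$ for all $a,b\in L$; it is regarded as a subset of $\mathbb R^L$. *)

From HB Require Import structures.
From mathcomp Require Import all_boot all_order all_algebra.
From mathcomp Require Import all_classical all_reals all_analysis.
Set Implicit Arguments. Unset Strict Implicit. Unset Printing Implicit Defensive.
Import Order.TTheory GRing.Theory Num.Theory.
Import numFieldNormedType.Exports.
Local Open Scope classical_set_scope.
Local Open Scope ring_scope.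

Definition lattice_dual (d : Order.disp_t) (L : latticeType d) (R : realType)
  : set (L -> R) :=
  [set x | (forall a : L, -1 <= x a <= 1) /\
           (forall a b : L, x (Order.join a b) = Num.max (x a) (x b)) /\
           (forall a b : L, x (Order.meet a b) = Num.min (x a) (x b))].

Definition path_connected_set (R : realType) (T : topologicalType) (A : set T) :=
  forall x y, A x -> A y ->
    exists f : R -> T, {within `[0, 1], continuous f} /\
      f 0 = x /\ f 1 = y /\ f @` `[0, 1] `<=` A.

(* A nonzero x in L^* takes a nonzero value x z; let c = +-1 be its sign.  The
   segment u |-> (1 - u) x + u c stays in L^*, because t |-> (1 - u) t + u c is
   nondecreasing and so commutes with max and min, and it never vanishes at z.
   Hence every nonzero x is joined to one of the constants 1, -1, and it remains
   to join these two.  Since L is distributive and nontrivial, a prime filter F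
   separates two of its elements (Zorn); the homomorphism chi equal to 1 on F and
   to -1 off F takes both signs, so the same segments join chi to both 1 and -1. *)

From HB Require Import structures.
From mathcomp Require Import all_boot all_order all_algebra.
From mathcomp Require Import all_classical all_reals all_analysis.
From mathcomp Require Import lra.
Import Order.TTheory GRing.Theory Num.Theory.
Import numFieldNormedType.Exports.
Local Open Scope classical_set_scope.
Local Open Scope ring_scope.
Set Implicit Arguments.
Unset Strict Implicit.

Lemma continuous_within_comp {S T U : topologicalType} (A : set T)
    (g : S -> T) (f : T -> U) :
  (forall s, A (g s)) -> continuous g -> {within A, continuous f} ->
  continuous (f \o g).
Proof.
move=> gA cg /subspace_continuousP cf s.
have gW : g @ nbhs s --> within A (nbhs (g s)).
  move=> P /= /(cg s); rewrite !nbhs_simpl.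
  by apply: (@filterS S (nbhs s)) => t /= /(_ (gA t)).
exact: cvg_trans (cvg_app f gW) (cf (g s) (gA s)).
Qed.

Lemma ptws_continuous {S V : topologicalType} {I : Type} (g : S -> {ptws I -> V}) :
  (forall i, continuous (fun s => g s i)) -> continuous g.
Proof.
move=> cg s; apply/cvg_sup => i.
exact: (continuous_comp_initial (cg i)).
Qed.

Section Clamp.
Variable R : realType.

Definition clamp01 (t : R) : R := Num.min 1 (Num.max 0 t).

Lemma clamp01_itv t : clamp01 t \in `[0, 1].
Proof.
by rewrite in_itv /= /clamp01 le_min ler01 le_max lexx ge_min lexx.
Qed.

Lemma clamp01_id t : t \in `[0, 1] -> clamp01 t = t.
Proof. by rewrite in_itv /= => /andP[t0 t1]; rewrite /clamp01 max_r // min_r. Qed.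

Lemma clamp01_continuous : continuous clamp01.
Proof.
apply: min_fun_continuous; first exact: cst_continuous.
by apply: max_fun_continuous; [exact: cst_continuous|exact: (fun x => cvg_id)].
Qed.

End Clamp.

Section PathJoined.
Variables (R : realType) (T : topologicalType).
Implicit Types (A : set T) (x y z : T).

Definition path_joined A x y := exists f : R -> T,
  {within `[0, 1], continuous f} /\ f 0 = x /\ f 1 = y /\ f @` `[0, 1] `<=` A.

Lemma path_joinedP A x y : path_joined A x y <-> exists f : R -> T,
  continuous f /\ f 0 = x /\ f 1 = y /\ f @` `[0, 1] `<=` A.
Proof.
have i0 : (0 : R) \in `[0, 1] by rewrite in_itv /= lexx ler01.
have i1 : (1 : R) \in `[0, 1] by rewrite in_itv /= lexx ler01.
split=> -[f [cf [f0 [f1 fA]]]]; last first.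
  by exists f; split; first exact: continuous_subspaceT.
exists (f \o @clamp01 R); split; last split; last split.
- by apply: continuous_within_comp cf; [exact: clamp01_itv|exact: clamp01_continuous].
- by rewrite /= clamp01_id.
- by rewrite /= clamp01_id.
- by move=> _ [t t01 <-]; rewrite /= clamp01_id //; apply: fA; exists t.
Qed.

Lemma path_joined_sym A x y : path_joined A x y -> path_joined A y x.
Proof.
move=> /path_joinedP[f [cf [f0 [f1 fA]]]]; apply/path_joinedP.
exists (f \o (fun t => 1 - t)); split; last split; last split.
- by move=> t; apply: continuous_comp (cf _); apply: cvgB; [exact: cvg_cst|exact: cvg_id].
- by rewrite /= subr0.
- by rewrite /= subrr.
- move=> _ [t /= /[!in_itv]/= /andP[t0 t1] <-]; apply: fA.
  by exists (1 - t) => //; rewrite /= in_itv /=; apply/andP; split; lra.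
Qed.

Lemma path_joined_trans A x y z :
  path_joined A x y -> path_joined A y z -> path_joined A x z.
Proof.
move=> /path_joinedP[f [cf [f0 [f1 fA]]]] /path_joinedP[g [cg [g0 [g1 gA]]]].
apply/path_joinedP.
pose h t := if t <= 2^-1 then f (2 * t) else g (2 * t - 1).
have ch : continuous h.
  apply/continuous_subspace_setT.
  have -> : [set: R] = `]-oo, 2^-1] `|` `[2^-1, +oo[.
    apply/seteqP; split=> // t _; rewrite /= !in_itv /= andbT.
    by apply/orP; exact: le_total.
  apply: withinU_continuous; [exact: lray_closed|exact: rray_closed| |].
  - apply: (@subspace_eq_continuous _ _ _ (from_subspace _ (f \o *%R 2))).
      by move=> t; rewrite inE /= in_itv /= /from_subspace /h => ->.
    apply: continuous_subspaceT => t; apply: continuous_comp (cf _).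
    by apply: cvgM; [exact: cvg_cst|exact: cvg_id].
  - apply: (@subspace_eq_continuous _ _ _ (from_subspace _ (g \o (fun t => 2 * t - 1)))).
      move=> t; rewrite inE /= in_itv /= andbT /from_subspace /h => ht.
      case: ifPn => // th; have -> : t = 2^-1 by apply: le_anti; rewrite th.
      by rewrite /= mulfV ?subrr ?g0 ?f1 // pnatr_eq0.
    apply: continuous_subspaceT => t; apply: continuous_comp (cg _).
    apply: cvgB; last exact: cvg_cst.
    by apply: cvgM; [exact: cvg_cst|exact: cvg_id].
exists h; split; last split; last split.
- exact: ch.
- by rewrite /h ifT ?invr_ge0 ?ler0n // mulr0.
- rewrite /h ifF; first by rewrite -g1; congr g; lra.
  by apply/negbTE; rewrite -ltNge; lra.
- move=> _ [t /= /[!in_itv]/= /andP[t0 t1] <-]; rewrite /h.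
  case: ifPn => [th|]; last rewrite -ltNge => th.
    by apply: fA; exists (2 * t) => //; rewrite /= in_itv /=; apply/andP; split; lra.
  by apply: gA; exists (2 * t - 1) => //; rewrite /= in_itv /=; apply/andP; split; lra.
Qed.

End PathJoined.

Section LatticeFilters.
Variables (d : Order.disp_t) (L : latticeType d).
Implicit Types (F G : set L) (a b u v w : L).

Definition lattice_filter F :=
  (forall u v, F u -> (u <= v)%O -> F v) /\
  (forall u v, F u -> F v -> F (Order.meet u v)).

Definition prime_filter F :=
  lattice_filter F /\ forall u v, F (Order.join u v) -> F u \/ F v.

Lemma upset_filter a : lattice_filter [set v | (a <= v)%O].
Proof.
by split=> [u v au uv|u v au av]; [exact: le_trans uv|rewrite /= lexI au].
Qed.

Lemma bigcup_chain_filter (C : set (set L)) :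
  (forall X, C X -> lattice_filter X) -> total_on C subset ->
  lattice_filter (\bigcup_(X in C) X).
Proof.
move=> Cfilter Ctot; split=> [u v [X CX Xu] uv|u v [X CX Xu] [Y CY Yv]].
  by exists X => //; have [upX _] := Cfilter X CX; exact: upX uv.
have [XY|YX] := Ctot X Y CX CY.
  by exists Y => //; have [_ mY] := Cfilter Y CY; exact: mY (XY _ Xu) Yv.
by exists X => //; have [_ mX] := Cfilter X CX; exact: mX Xu (YX _ Yv).
Qed.

(* [Zorn_bigcup] also covers the empty chain, whose union is the empty filter:
   hence the clause [F w -> F a] instead of [F a]. *)
Lemma maximal_filter_exists a b : ~ (a <= b)%O ->
  exists F, [/\ lattice_filter F, F a, ~ F b &
    forall G, lattice_filter G -> F `<=` G -> ~ G b -> G `<=` F].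
Proof.
move=> nab.
pose P F := [/\ lattice_filter F, ~ F b & forall w, F w -> F a].
have [A [[Afilter nAb Aa] Amax]] : exists A, P A /\ forall B, A `<` B -> ~ P B.
  apply: Zorn_bigcup => C CP Ctot; split.
  - by apply: bigcup_chain_filter => // X /CP[].
  - by move=> [X /CP[_ nXb _] Xb].
  - move=> w [X CX Xw]; have [_ _ Xa] := CP X CX.
    by exists X => //; exact: Xa Xw.
have {}Aa : A a.
  apply: contrapT => nAa; apply: (Amax [set v | (a <= v)%O]).
  - split=> [w Aw|sub]; first by case: nAa; exact: Aa Aw.
    by apply: nAa; exact: sub a (lexx a).
  - by split=> // [|w _]; [exact: upset_filter|exact: lexx].
exists A; split=> // G Gfilter AG nGb; apply: contrapT => nGA.
by apply: (Amax G) => //; split=> // w _; exact: AG.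
Qed.

Definition filter_adjoin F x := [set w | exists2 f, F f & (Order.meet f x <= w)%O].

Lemma filter_adjoin_filter F x :
  lattice_filter F -> lattice_filter (filter_adjoin F x).
Proof.
move=> [_ mF]; split=> [u v [f Ff fu] uv|u v [f Ff fu] [g Fg gv]].
  by exists f => //; exact: le_trans uv.
exists (Order.meet f g); first exact: mF.
rewrite lexI; apply/andP; split.
  by apply: le_trans fu; apply: leI2 => //; exact: leIl.
by apply: le_trans gv; apply: leI2 => //; exact: leIr.
Qed.

Lemma sub_filter_adjoin F x : F `<=` filter_adjoin F x.
Proof. by move=> f Ff; exists f => //; exact: leIl. Qed.

Lemma filter_adjoin_mem F x f : F f -> filter_adjoin F x x.
Proof. by move=> Ff; exists f => //; exact: leIr. Qed.

End LatticeFilters.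

Section PrimeFilters.
Variables (d : Order.disp_t) (L : distrLatticeType d).
Implicit Types (F G : set L) (a b u v : L).

Lemma maximal_filter_prime F a b :
  lattice_filter F -> F a -> ~ F b ->
  (forall G, lattice_filter G -> F `<=` G -> ~ G b -> G `<=` F) ->
  forall u v, F (Order.join u v) -> F u \/ F v.
Proof.
move=> Ffilter Fa nFb Fmax u v Fuv; have [upF mF] := Ffilter.
apply: contrapT => /not_orP[nFu nFv].
have below_b x : ~ F x -> exists2 f, F f & (Order.meet f x <= b)%O.
  move=> nFx; apply: contrapT => nb; apply: nFx; apply: (Fmax (filter_adjoin F x)).
  - exact: filter_adjoin_filter.
  - exact: sub_filter_adjoin.
  - by move=> [f Ff fb]; apply: nb; exists f.
  - exact: filter_adjoin_mem Fa.
have [f Ff fu] := below_b u nFu; have [g Fg gv] := below_b v nFv.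
apply: nFb; apply: (upF _ _ (mF _ _ (mF _ _ Ff Fg) Fuv)).
rewrite meetUr leUx; apply/andP; split.
  by apply: le_trans fu; apply: leI2 => //; exact: leIl.
by apply: le_trans gv; apply: leI2 => //; exact: leIr.
Qed.

Lemma prime_filter_separation a b : ~ (a <= b)%O ->
  exists F, [/\ prime_filter F, F a & ~ F b].
Proof.
move=> /maximal_filter_exists[F [Ffilter Fa nFb Fmax]].
by exists F; split=> //; split=> //; exact: maximal_filter_prime Fa nFb Fmax.
Qed.

End PrimeFilters.

Section Affine.
Variable R : realType.

Lemma maxr_affine (a b p q : R) : 0 <= a ->
  Num.max (a * p + b) (a * q + b) = a * Num.max p q + b.
Proof. by move=> a0; rewrite maxr_pMr // real_addr_maxl ?num_real. Qed.

Lemma minr_affine (a b p q : R) : 0 <= a ->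
  Num.min (a * p + b) (a * q + b) = a * Num.min p q + b.
Proof. by move=> a0; rewrite minr_pMr // real_addr_minl ?num_real. Qed.

Lemma convex_comb_neq0 (c h u : R) :
  0 <= u <= 1 -> 0 < c * h -> (1 - u) * h + u * c != 0.
Proof.
move=> /andP[u0 u1] ch.
have c0 : c != 0 by apply: contraTneq ch => ->; rewrite mul0r ltxx.
have cc : 0 < c * c by rewrite -expr2 exprn_even_gt0.
have : 0 < c * ((1 - u) * h + u * c).
  rewrite mulrDr mulrCA [c * (u * c)]mulrCA.
  have [->|u_neq1] := eqVneq u 1; first by rewrite subrr mul0r add0r mul1r.
  have u_lt1 : u < 1 by rewrite lt_neqAle u_neq1 u1.
  by apply: ltr_pwDl; [rewrite mulr_gt0 // subr_gt0|rewrite mulr_ge0 // ltW].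
by apply: contraTneq => ->; rewrite mulr0 ltxx.
Qed.

End Affine.

Section LatticeDual.
Variables (R : realType) (d : Order.disp_t) (L : latticeType d).
Implicit Types (chi h x : L -> R) (c u : R).

Local Notation dual := (@lattice_dual d L R).
Local Notation dual0 := (@setD {ptws L -> R} dual [set (fun _ : L => 0 : R)]).

Lemma lattice_dual_cst_segment h c u : dual h -> -1 <= c <= 1 -> 0 <= u <= 1 ->
  dual (fun z => (1 - u) * h z + u * c).
Proof.
move=> [hb [hj hm]] /andP[c0 c1] /andP[u0 u1]; split; [|split].
- by move=> z; have /andP[? ?] := hb z; apply/andP; split; nra.
- by move=> z w; rewrite hj maxr_affine // subr_ge0.
- by move=> z w; rewrite hm minr_affine // subr_ge0.
Qed.

Lemma path_joined_to_cst h c z : dual h -> -1 <= c <= 1 -> 0 < c * h z ->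
  path_joined R dual0 h (fun _ => c).
Proof.
move=> hdual c11 chz; apply/path_joinedP.
exists (fun u z => (1 - u) * h z + u * c); split; last split; last split.
- apply: ptws_continuous => w u.
  apply: cvgD; apply: cvgM; try exact: cvg_cst; last exact: cvg_id.
  by apply: cvgB; [exact: cvg_cst|exact: cvg_id].
- by apply/funext => w; rewrite subr0 mul1r mul0r addr0.
- by apply/funext => w; rewrite subrr mul0r add0r mul1r.
- move=> _ [u /= /[!in_itv]/= u01 <-]; split.
    exact: lattice_dual_cst_segment.
  by move=> /(congr1 (fun f => f z))/eqP; apply/negP; exact: convex_comb_neq0.
Qed.

Lemma nonzero_dual_path_joined chi x a b :
  dual chi -> 0 < chi a -> chi b < 0 -> dual0 x -> path_joined R dual0 x chi.
Proof.
move=> chi_dual chi_a chi_b [x_dual x_neq0].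
have [z xz_neq0] : exists z, x z != 0.
  apply: contrapT => x0; apply: x_neq0; apply/funext => z; apply/eqP.
  by apply: contrapT => xz; apply: x0; exists z; apply/negP.
have [c [c11 cxz [w cchi]]] :
    exists c : R, [/\ -1 <= c <= 1, 0 < c * x z & exists w, 0 < c * chi w].
  case: (ltrgtP (x z) 0) => [xz_lt0|xz_gt0|/eqP]; last by rewrite (negbTE xz_neq0).
    by exists (-1); split; [apply/andP; split; lra|lra|exists b; lra].
  by exists 1; split; [apply/andP; split; lra|lra|exists a; lra].
apply: path_joined_trans (path_joined_to_cst x_dual c11 cxz) _.
exact/path_joined_sym/(path_joined_to_cst chi_dual c11 cchi).
Qed.

End LatticeDual.

Section SignIndicator.
Variables (R : realType) (d : Order.disp_t) (L : latticeType d).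

Definition sign_indicator (F : set L) : L -> R :=
  fun z => if `[< F z >] then 1 else -1.

Lemma prime_filter_sign_indicator F :
  prime_filter F -> lattice_dual (sign_indicator F).
Proof.
move=> [[upF mF] prF].
have Fjoin u v : `[< F (Order.join u v) >] = `[< F u >] || `[< F v >].
  rewrite -asbool_or; apply: asbool_equiv_eq; split=> [/prF //|[Fu|Fv]].
    exact: upF _ _ Fu (leUl _ _).
  exact: upF _ _ Fv (leUr _ _).
have Fmeet u v : `[< F (Order.meet u v) >] = `[< F u >] && `[< F v >].
  rewrite -asbool_and; apply: asbool_equiv_eq; split=> [Fuv|[Fu Fv]].
    by split; [exact: upF _ _ Fuv (leIl _ _)|exact: upF _ _ Fuv (leIr _ _)].
  exact: mF.
have N11 : (-1 : R) <= 1 by lra.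
rewrite /sign_indicator; split; [|split] => u.
- by case: ifP => _; apply/andP; split; lra.
- move=> v; rewrite Fjoin; case: `[< F u >]; case: `[< F v >] => /=;
    by rewrite ?maxxx ?(max_l N11) ?(max_r N11).
- move=> v; rewrite Fmeet; case: `[< F u >]; case: `[< F v >] => /=;
    by rewrite ?minxx ?(min_l N11) ?(min_r N11).
Qed.

End SignIndicator.

Theorem mainTheorem10 (R : realType) (d : Order.disp_t) (L : distrLatticeType d) :
  (exists a b : L, a != b) ->
  path_connected_set R
    (@setD {ptws L -> R} (@lattice_dual d L R) [set (fun _ : L => 0 : R)]).
Proof.
move=> [a0 [b0 a0b0]].
have [a [b nab]] : exists a b : L, ~ (a <= b)%O.
  have [le_ab|/negP] := boolP (a0 <= b0)%O; last by exists a0, b0.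
  by exists b0, a0 => le_ba; rewrite eq_le le_ab le_ba in a0b0.
have [F [Fprime Fa nFb]] := prime_filter_separation nab.
have chi_dual := prime_filter_sign_indicator R Fprime.
have chi_a : 0 < sign_indicator R F a by rewrite /sign_indicator asboolT.
have chi_b : sign_indicator R F b < 0 by rewrite /sign_indicator asboolF // ltrN10.
move=> x y Ax Ay.
apply: path_joined_trans (nonzero_dual_path_joined chi_dual chi_a chi_b Ax) _.
exact/path_joined_sym/(nonzero_dual_path_joined chi_dual chi_a chi_b Ay).
Qed.
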